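(* Let $\mathcal{P}$ be a profile of unrooted phylogenetic trees whose display graph $G(\mathcal{P})$ is connected, let $S$ be an agreement supertree of $\mathcal{P}$, and let $\Psi$ be the cut function of $S$. Then (i) for every edge $e\in E(S)$, $\Psi(e)$ is a cut of $G(\mathcal{P})$; and (ii) for every edge $e\in E(S)$, $\Psi(e)$ is a minimal cut of $G(\mathcal{P})$ if and only if $G(\mathcal{P})-\Psi(e)$ has exactly two connected components.
   Context: A phylogenetic tree $T$ is an unrooted tree whose leaves are bijectively labeled by $\mathcal{L}(T)$ (leaves identified with labels; internal vertices have degree at least three). A profile $\mathcal{P}=\{T_1,\dots,T_k\}$ is a finite collection of phylogenetic trees (input trees), $\mathcal{L}(\mathcal{P})=\bigcup_i\mathcal{L}(T_i)$; internal vertices of distinct trees are disjoint, while leaves with the same label are the same vertex. The display graph $G(\mathcal{P})$ has vertex set $\bigcup_i V(T_i)$ and edge set $\bigcup_i E(T_i)$. For phylogenetic trees $S,T$ with $\mathcal{L}(T)\subseteq\mathcal{L}(S)$, $S_{|\mathcal{L}(T)}$ is obtained from the minimal subtree of $S$ connecting the leaves in $\mathcal{L}(T)$ by suppressing degree-two vertices; $S$ and $T$ agree if $S_{|\mathcal{L}(T)}$ is label-preservingly isomorphic to $T$. An agreement supertree of $\mathcal{P}$ is a phylogenetic tree with label set $\mathcal{L}(\mathcal{P})$ agreeing with every tree of $\mathcal{P}$. Cut function: for an agreement supertree $S$ and an edge $e=\{u,v\}$ of $S$, let $L_u$, $L_v$ be the label sets of the subtrees of $S-e$ containing $u$ and $v$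 respectively. For an input tree $T$ with $\mathcal{L}(T)\cap L_u\neq\emptyset$ and $\mathcal{L}(T)\cap L_v\neq\emptyset$, there is a unique edge $f$ of $T$ whose deletion separates $\mathcal{L}(T)$ into $\mathcal{L}(T)\cap L_u$ and $\mathcal{L}(T)\cap L_v$; $e$ is called the agreement edge of $S$ corresponding to $f$. The cut function $\Psi$ maps each $e\in E(S)$ to the set $\Psi(e)$ of all edges $f$ of input trees such that $e$ is the agreement edge corresponding to $f$ (input trees whose labels lie entirely in $L_u$ or entirely in $L_v$ contribute no edge). A cut of a connected graph $G$ is $F\subseteq E(G)$ with $G-F$ (same vertices, edges of $F$ removed) disconnected; minimal if no proper subset is a cut. *)

From mathcomp Require Import all_boot.
From mathcomp Require Import boolp.

Set Implicit Arguments.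
Unset Strict Implicit.
Unset Printing Implicit Defensive.

Section Graphs.
Variable V : finType.

Definition adj (E : {set {set V}}) : rel V := fun x y => [set x; y] \in E.

Definition is_graph (Vs : {set V}) (E : {set {set V}}) : Prop :=
  forall e, e \in E ->
    exists x y, [/\ x \in Vs, y \in Vs, x != y & e = [set x; y]].

Definition connected_graph (Vs : {set V}) (E : {set {set V}}) : Prop :=
  (exists x, x \in Vs) /\
  (forall x y, x \in Vs -> y \in Vs -> connect (adj E) x y).

(* a tree: connected graph without cycles (a cycle = at least 3 distinct
   vertices, cyclically adjacent) *)
Definition is_tree (Vs : {set V}) (E : {set {set V}}) : Prop :=
  [/\ is_graph Vs E, connected_graph Vs E &
      forall c : seq V, ucycle (adj E) c -> size c <= 2].

Definition deg (E : {set {set V}}) (v : V) : nat := #|[set e in E | v \in e]|.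

Definition ncomp (Vs : {set V}) (E : {set {set V}}) : nat :=
  #|[set [set y in Vs | connect (adj E) x y] | x in Vs]|.

Definition is_cut (Vs : {set V}) (E F : {set {set V}}) : Prop :=
  F \subset E /\ ~ connected_graph Vs (E :\: F).

Definition is_min_cut (Vs : {set V}) (E F : {set {set V}}) : Prop :=
  is_cut Vs E F /\ forall F' : {set {set V}}, F' \proper F -> ~ is_cut Vs E F'.

Definition on_path (E : {set {set V}}) (a b v : V) : Prop :=
  exists p : seq V,
    [/\ uniq (a :: p), path (adj E) a p, last a p = b & v \in a :: p].

(* vertex set of the minimal subtree connecting Y *)
Definition spanV (Vs : {set V}) (E : {set {set V}}) (Y : {set V}) : {set V} :=
  [set v in Vs | `[< exists a b, [/\ a \in Y, b \in Y & on_path E a b v] >]].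

Definition spanE (E : {set {set V}}) (M : {set V}) : {set {set V}} :=
  [set e in E | e \subset M].

(* after suppressing degree-two vertices: remaining vertices *)
Definition suppV (Vs : {set V}) (E : {set {set V}}) (Y : {set V}) : {set V} :=
  let M := spanV Vs E Y in [set v in M | deg (spanE E M) v != 2].

Definition suppAdj (Vs : {set V}) (E : {set {set V}}) (Y : {set V})
    (w1 w2 : V) : Prop :=
  let M := spanV Vs E Y in
  w1 != w2 /\
  exists p : seq V,
    [/\ uniq (w1 :: p), path (adj (spanE E M)) w1 p, last w1 p = w2 &
        forall z, z \in behead (belast w1 p) -> z \notin suppV Vs E Y].

End Graphs.

(* ---------- Phylogenetic trees over label type X ----------
   vertices: inl x (leaf labeled x) or inr u (internal vertex u : I) *)
Record ptree (X I : finType) := PTree {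
  pV : {set X + I};
  pE : {set {set X + I}}
}.

Section Phylo.
Variables X : finType.

Definition labels (I : finType) (T : ptree X I) : {set X} :=
  [set x | inl x \in pV T].

Definition is_phylo (I : finType) (T : ptree X I) : Prop :=
  [/\ is_tree (pV T) (pE T),
      (forall x, inl x \in pV T -> deg (pE T) (inl x) <= 1) &
      (forall u, inr u \in pV T -> 3 <= deg (pE T) (inr u))].

(* S and T agree: S|L(T) (minimal subtree + suppression) is
   label-preservingly isomorphic to T *)
Definition agrees (J I : finType) (S : ptree X J) (T : ptree X I) : Prop :=
  let Y := [set (inl x : X + J) | x in labels T] in
  let W := suppV (pV S) (pE S) Y in
  exists f : X + J -> X + I,
    [/\ {in W &, injective f},
        f @: W = pV T,
        (forall x, inl x \in W -> f (inl x) = inl x) &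
        {in W &, forall u v, suppAdj (pV S) (pE S) Y u v <-> [set f u; f v] \in pE T}].

Definition sideL (I : finType) (T : ptree X I) (e : {set X + I}) (u : X + I)
    : {set X} :=
  [set x | (inl x \in pV T) && connect (adj (pE T :\ e)) u (inl x)].

Variables (I : finType) (k : nat).

Definition emb (i : 'I_k) (w : X + I) : X + ('I_k * I) :=
  match w with inl x => inl x | inr u => inr (i, u) end.

Definition dV (P : 'I_k -> ptree X I) : {set X + ('I_k * I)} :=
  \bigcup_(i < k) (emb i @: pV (P i)).

Definition dE (P : 'I_k -> ptree X I) : {set {set X + ('I_k * I)}} :=
  \bigcup_(i < k) [set emb i @: g | g : {set X + I} in pE (P i)].

Definition agreement_supertree (J : finType) (P : 'I_k -> ptree X I)
    (S : ptree X J) : Prop :=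
  [/\ is_phylo S,
      labels S = \bigcup_(i < k) labels (P i) &
      forall i, agrees S (P i)].

(* cut function: Psi(e) = all input-tree edges g (as edges of the display
   graph) such that e is the agreement edge corresponding to g *)
Definition psi (J : finType) (P : 'I_k -> ptree X I) (S : ptree X J)
    (e : {set X + J}) : {set {set X + ('I_k * I)}} :=
  [set f | [exists i : 'I_k, [exists g in pE (P i),
     [exists u : X + J, [exists v : X + J, [exists a : X + I, [exists b : X + I,
       [&& e == [set u; v], g == [set a; b], f == emb i @: g,
           labels (P i) :&: sideL S e u != set0,
           labels (P i) :&: sideL S e v != set0,
           sideL (P i) g a == labels (P i) :&: sideL S e u &
           sideL (P i) g b == labels (P i) :&: sideL S e v]]]]]]]].

End Phylo.

From mathcomp Require Import all_boot.
From mathcomp Require Import boolp.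

Set Implicit Arguments.
Unset Strict Implicit.
Unset Printing Implicit Defensive.

(* Fix an edge [e = {u, v}] of [S].  An input tree [T] with leaves on both
   sides of [e] has exactly one edge [f] splitting [L(T)] as [e] does: a walk
   of [S] through suppressed (degree-two) vertices is determined by its first
   step, so exactly one edge of [S|L(T)] crosses [e], and the agreement
   isomorphism maps it to [f].  Say a display-graph vertex avoids the [v]-side
   if, in every input tree containing it, it reaches no [v]-side leaf without
   using an edge of [Psi(e)].  This propagates along the edges outside
   [Psi(e)]; every [u]-side leaf avoids the [v]-side and no [v]-side leaf does,
   and both sides contain leaves since internal vertices of [S] have degree at
   least three.  Hence [Psi(e)] is a cut.  A minimal cut always leaves exactly
   two components; conversely, when [G - Psi(e)] has two components, the ends
   of an edge of [Psi(e)] avoid opposite sides, so they lie in different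
   components and restoring any edge of [Psi(e)] reconnects the graph. *)

Section SeqPaths.
Variable V : eqType.

Lemma path_exit (e e' : rel V) x p : path e x p -> ~~ path e' x p ->
  exists p1 z p2, [/\ p = p1 ++ z :: p2, e (last x p1) z & ~~ e' (last x p1) z].
Proof.
elim: p x => //= a p IH x /andP[xa pa]; case: (boolP (e' x a)) => /= h.
  by case/(IH _ pa) => p1 [z [p2 [-> h1 h2]]]; exists (a :: p1), z, p2.
by move=> _; exists [::], a, p.
Qed.

Lemma behead_belast_cat (x : V) p1 z p2 :
  behead (belast x (p1 ++ z :: p2)) = p1 ++ belast z p2.
Proof. by case: p1 => //= a p1; elim: p1 a => //= b p1 IH a; rewrite IH. Qed.

Lemma cons_rev_belast (x : V) p : last x p :: rev (belast x p) = rev (x :: p).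
Proof. by rewrite -rev_rcons -lastI. Qed.

Lemma last_rev_belast (x : V) p : last (last x p) (rev (belast x p)) = x.
Proof.
have : last x p :: rev (belast x p) = rcons (rev p) x.
  by rewrite cons_rev_belast rev_cons.
move: (last x p) (rev (belast x p)) => a s h.
by rewrite -[RHS](last_rcons a (rev p) x) -h.
Qed.

End SeqPaths.

Lemma imset_set2 (A B : finType) (h : A -> B) a b : h @: [set a; b] = [set h a; h b].
Proof. by rewrite imsetU1 imset_set1. Qed.

Section Graphs.
Variable V : finType.
Implicit Types (Vs : {set V}) (E F : {set {set V}}) (x y z a b : V).

Lemma set2_inj a b c d :
  [set a; b] = [set c; d] -> (a = c /\ b = d) \/ (a = d /\ b = c).
Proof.
move=> H.
have /set2P ha : a \in [set c; d] by rewrite -H set21.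
have /set2P hb : b \in [set c; d] by rewrite -H set22.
have /set2P hc : c \in [set a; b] by rewrite H set21.
have /set2P hd : d \in [set a; b] by rewrite H set22.
by case: ha hb hc hd => -> [] -> [] ? [] ?; subst; tauto.
Qed.

Lemma adj_sym E : symmetric (adj E).
Proof. by move=> x y; rewrite /adj setUC. Qed.

Lemma connect_adjC E x y : connect (adj E) x y = connect (adj E) y x.
Proof. exact: (sym_connect_sym (adj_sym E)). Qed.

Lemma connect_adjS E E' x y :
  E \subset E' -> connect (adj E) x y -> connect (adj E') x y.
Proof. by move=> sEE'; apply: connect_sub => a b ab; apply/connect1/(subsetP sEE'). Qed.

Lemma connect_invariant (e : rel V) (Q : V -> Prop) x y :
  (forall a b, Q a -> e a b -> Q b) -> Q x -> connect e x y -> Q y.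
Proof.
move=> clQ Qx /connectP [p pp ->]; elim: p x Qx pp => //= c p IH x Qx /andP[xc pc].
exact: IH (clQ _ _ Qx xc) pc.
Qed.

Lemma connect_exit (e : rel V) (Q : V -> Prop) x y :
  connect e x y -> Q x -> ~ Q y -> exists a b, [/\ e a b, Q a & ~ Q b].
Proof.
move=> cxy Qx nQy; apply: contrapT => noexit; apply: nQy.
apply: connect_invariant Qx cxy => a b Qa ab; apply: contrapT => nQb.
by apply: noexit; exists a, b.
Qed.

Lemma graph_adj Vs E x y :
  is_graph Vs E -> adj E x y -> [/\ x \in Vs, y \in Vs & x != y].
Proof.
move=> G /G [c [d [cV dV cd /set2_inj [[-> ->]|[-> ->]]]]]; split => //.
by rewrite eq_sym.
Qed.

Lemma path_last_in Vs E x p :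
  is_graph Vs E -> x \in Vs -> path (adj E) x p -> last x p \in Vs.
Proof.
move=> G; elim: p x => //= c p IH x xV /andP[xc pc]; apply: IH pc.
by case: (graph_adj G xc).
Qed.

Lemma connect_setD1 E a b z : connect (adj E) a z ->
  connect (adj (E :\ [set a; b])) a z \/ connect (adj (E :\ [set a; b])) b z.
Proof.
pose Q w := connect (adj (E :\ [set a; b])) a w \/ connect (adj (E :\ [set a; b])) b w.
move=> caz; apply: (connect_invariant (Q := Q)) caz; last by left; apply: connect0.
move=> c d Qc cd; case: (eqVneq [set c; d] [set a; b]) => [/set2_inj|ne].
  by case=> [[_ ->]|[_ ->]]; [right|left]; apply: connect0.
have cd' : adj (E :\ [set a; b]) c d by rewrite /adj in_setD1 ne.
by case: Qc => h; [left|right]; apply: connect_trans h (connect1 cd').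
Qed.

Lemma connect_setD1_side Vs E (Q : V -> Prop) a b z :
  connected_graph Vs E -> a \in Vs -> z \in Vs ->
  (forall c d, Q c -> adj (E :\ [set a; b]) c d -> Q d) -> Q a -> ~ Q b ->
  connect (adj (E :\ [set a; b])) a z <-> Q z.
Proof.
move=> [_ conn] aV zV clQ Qa nQb; split=> [caz|].
  exact: connect_invariant clQ Qa caz.
move=> Qz; case: (connect_setD1 b (conn _ _ aV zV)) => // cbz; exfalso; apply: nQb.
by rewrite connect_adjC in cbz; apply: connect_invariant clQ Qz cbz.
Qed.

Lemma disconnected_pair Vs E :
  (exists x, x \in Vs) -> ~ connected_graph Vs E ->
  exists x y, [/\ x \in Vs, y \in Vs & ~~ connect (adj E) x y].
Proof.
move=> ne ncon; apply: contrapT => H; apply: ncon; split => // x y xV yV.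
by apply: contrapT => /negP nc; apply: H; exists x, y.
Qed.

Definition component Vs E x := [set y in Vs | connect (adj E) x y].

Lemma component_eq Vs E x y :
  connect (adj E) x y -> component Vs E x = component Vs E y.
Proof.
move=> cxy; apply/setP => z; rewrite !inE; congr (_ && _).
exact: (same_connect (sym_connect_sym (adj_sym E)) cxy z).
Qed.

Lemma component_neq Vs E x y :
  y \in Vs -> ~~ connect (adj E) x y -> component Vs E x != component Vs E y.
Proof.
move=> yV nc; apply/eqP => h.
have : y \in component Vs E y by rewrite inE yV connect0.
by rewrite -h inE (negbTE nc) andbF.
Qed.

Lemma ncomp_gt1 Vs E x y :
  x \in Vs -> y \in Vs -> ~~ connect (adj E) x y -> 1 < ncomp Vs E.
Proof.
move=> xV yV nc; apply/card_gt1P; exists (component Vs E x), (component Vs E y).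
by split; [apply: imset_f|apply: imset_f|apply: component_neq].
Qed.

Lemma ncomp2_cover Vs E x y z :
  ncomp Vs E = 2 -> x \in Vs -> y \in Vs -> ~~ connect (adj E) x y ->
  z \in Vs -> connect (adj E) x z \/ connect (adj E) y z.
Proof.
move=> n2 xV yV nc zV.
have comps : [set component Vs E x; component Vs E y] =
             [set component Vs E w | w in Vs].
  apply/eqP; rewrite eqEcard cards2 component_neq //= -[#|_|]/(ncomp Vs E) n2.
  by rewrite andbT; apply/subsetP => c /set2P [] ->; apply: imset_f.
have zz : z \in component Vs E z by rewrite inE zV connect0.
have : component Vs E z \in [set component Vs E x; component Vs E y].
  by rewrite comps imset_f.
by case/set2P => h; move: zz; rewrite h inE => /andP[_ c]; [left|right].
Qed.

(* With three components, the first edge of [F] on a path leaving the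
   component of [z1] can be restored: doing so merges only two components. *)
Lemma min_cut_ncomp2 Vs E F :
  connected_graph Vs E -> is_min_cut Vs E F -> ncomp Vs (E :\: F) = 2.
Proof.
move=> [ne conn] [[sFE ncon] minF].
have [x [y [xV yV nc]]] := disconnected_pair ne ncon.
apply/eqP; rewrite eqn_leq (ncomp_gt1 xV yV nc) andbT leqNgt; apply/negP.
case/card_gt2P => _ [_ [_ [[/imsetP [z1 z1V ->] /imsetP [z2 z2V ->]
  /imsetP [z3 z3V ->]] [n12 n23 n31]]]].
have split_comps a b : component Vs (E :\: F) a != component Vs (E :\: F) b ->
    ~ connect (adj (E :\: F)) a b.
  by move=> /eqP ne_ab cab; apply/ne_ab/component_eq.
have [a [b [ab ca ncb]]] :=
  connect_exit (Q := connect (adj (E :\: F)) z1) (conn _ _ z1V z2V)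
    (connect0 _ z1) (split_comps _ _ n12).
pose f := [set a; b].
have fF : f \in F.
  apply: contrapT => /negP nfF; apply/ncb/(connect_trans ca)/connect1.
  by rewrite /adj in_setD nfF.
have EFf : E :\: (F :\ f) :\ f = E :\: F.
  by apply/setP => g; rewrite !inE; case: eqP => // ->; rewrite fF.
pose w := if connect (adj (E :\: F)) b z2 then z3 else z2.
have nc1w : ~ connect (adj (E :\: F)) z1 w.
  by rewrite /w; case: ifP => _; [rewrite connect_adjC|]; apply: split_comps.
have ncbw : ~ connect (adj (E :\: F)) b w.
  rewrite /w; case: ifP => [cbz2 cbz3|/negP //].
  apply: (split_comps _ _ n23); rewrite connect_adjC in cbz2.
  exact: connect_trans cbz2 cbz3.
apply: (minF (F :\ f)); first exact: properD1.
split; first exact: subset_trans (subsetDl _ _) sFE.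
have sEF : E :\: F \subset E :\: (F :\ f) by apply/setDS/subD1set.
case=> _ /(_ z1 w z1V) cw; have wV : w \in Vs by rewrite /w; case: ifP.
have caw : connect (adj (E :\: (F :\ f))) a w.
  by apply: connect_trans (cw wV); rewrite connect_adjC; apply: connect_adjS ca.
rewrite /f in EFf; case: (connect_setD1 b caw); rewrite EFf.
- by move=> ca'w; apply/nc1w/(connect_trans ca ca'w).
- exact: ncbw.
Qed.

Lemma ncomp2_min_cut Vs E F :
  is_cut Vs E F -> ncomp Vs (E :\: F) = 2 ->
  (forall f, f \in F -> exists a b,
     [/\ f = [set a; b], a \in Vs, b \in Vs & ~~ connect (adj (E :\: F)) a b]) ->
  is_min_cut Vs E F.
Proof.
move=> cutF n2 crossF; split=> // F' /properP [sF'F [f fF nfF']] [_ ncon].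
have [a [b [fab aV bV nab]]] := crossF f fF; subst f.
have sEF : E :\: F \subset E :\: F' by apply: setDS.
have ab : adj (E :\: F') a b.
  by rewrite /adj in_setD nfF' (subsetP cutF.1 _ fF).
have ca z : z \in Vs -> connect (adj (E :\: F')) a z.
  move=> zV; case: (ncomp2_cover n2 aV bV nab zV) => c; first exact: connect_adjS c.
  exact: connect_trans (connect1 ab) (connect_adjS sEF c).
apply: ncon; split=> [|x y xV yV]; first by exists a.
by apply: connect_trans (ca _ yV); rewrite connect_adjC; apply: ca.
Qed.

Lemma tree_ucycle_size Vs E x p :
  is_tree Vs E -> uniq (x :: p) -> path (adj E) x p -> adj E (last x p) x ->
  size p <= 1.
Proof.
case=> _ _ acyclic up xp px; apply: (acyclic (x :: p)).
by move: up => /= /andP[xp' up]; rewrite /ucycle /= rcons_path xp px xp' up.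
Qed.

Lemma connect_upath (e : rel V) x y :
  connect e x y -> exists p, [/\ path e x p, uniq (x :: p) & last x p = y].
Proof.
by case/connectP => p pp ->; case: (shortenP pp) => p' pp' up' _; exists p'.
Qed.

Lemma tree_edge_separates Vs E u v :
  is_tree Vs E -> [set u; v] \in E -> ~ connect (adj (E :\ [set u; v])) u v.
Proof.
move=> T uvE /connect_upath [p [pp up lp]].
have [G _ _] := T; have [_ _ uv] := graph_adj G (uvE : adj E u v).
have subE a b : adj (E :\ [set u; v]) a b -> adj E a b.
  by rewrite /adj in_setD1 => /andP[].
have := tree_ucycle_size T up (sub_path subE pp).
rewrite lp adj_sym /adj uvE => /(_ isT).
case: p pp up lp => [|c [|? ?]] //= pp _ lp _; first by rewrite lp eqxx in uv.
by move: pp; rewrite lp andbT /adj in_setD1 eqxx.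
Qed.

Lemma maximal_upath (e : rel V) x : exists p,
  [/\ path e x p, uniq (x :: p) & forall w, e (last x p) w -> w \in x :: p].
Proof.
pose long n := `[< exists p, [/\ path e x p, uniq (x :: p) & size p = n] >].
have long0 : exists n, long n by exists 0; apply/asboolP; exists [::].
have long_bounded n : long n -> n <= #|V|.
  case/asboolP => p [_ /card_uniqP /= up <-].
  by apply: leq_trans (leqnSn _) _; rewrite -up max_card.
have [_ /asboolP [p [pp up <-]] maxp] := ex_maxnP long0 long_bounded.
exists p; split=> // w pw; apply: contraT => wp.
have : long (size p).+1.
  apply/asboolP; exists (rcons p w); rewrite rcons_path pp pw size_rcons.
  by rewrite -rcons_cons rcons_uniq wp up.
by move/maxp; rewrite ltnn.
Qed.

Lemma tree_upath_penultimate Vs E x p n :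
  is_tree Vs E -> uniq (x :: p) -> path (adj E) x p ->
  n \in x :: p -> n != last x p -> adj E (last x p) n -> n = last x (belast x p).
Proof.
move=> T up pp np nl ln.
have [s [q xp]] : exists s q, x :: p = s ++ n :: q.
  exists (take (index n (x :: p)) (x :: p)), (drop (index n (x :: p)).+1 (x :: p)).
  by rewrite -{2}(nth_index x np) -drop_nth ?index_mem // cat_take_drop.
have [uq pq lq] : [/\ uniq (n :: q), path (adj E) n q & last x p = last n q].
  move: up pp; case: s xp => [|y s] /= [-> ->] //.
  rewrite cat_path last_cat cat_uniq => /andP[_ /and3P[_ _ /= ->]].
  by case/andP => _ /andP[_ ->].
rewrite lq in nl ln; have := tree_ucycle_size T uq pq ln.
case: q xp {uq pq} lq nl ln => [|l [|? ?]] xp lq //=; first by rewrite eqxx.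
move=> _ _ _; rewrite lastI lq /= in xp.
have /rcons_inj [->] : rcons (belast x p) l = rcons (rcons s n) l
  by rewrite xp -!cats1 -catA.
by rewrite last_rcons.
Qed.

Lemma graph_edge_at Vs E g z :
  is_graph Vs E -> g \in E -> z \in g -> exists2 n, g = [set z; n] & adj E z n.
Proof.
move=> G gE zg; have [c [d [_ _ _ gcd]]] := G g gE.
have gdc : g = [set d; c] by rewrite gcd setUC.
by move: zg; rewrite gcd => /set2P [] ->; [exists d|exists c]; rewrite /adj -?gcd -?gdc.
Qed.

End Graphs.

Section SupertreeEdge.
Variables (X J : finType) (S : ptree X J) (u v : X + J).
Hypotheses (phS : is_phylo S) (uvS : [set u; v] \in pE S).

Let e := [set u; v].
Let E' := pE S :\ e.

Lemma supertree_tree : is_tree (pV S) (pE S).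
Proof. by case: phS. Qed.

Lemma supertree_graph : is_graph (pV S) (pE S).
Proof. by case: supertree_tree. Qed.

Lemma adj_setD1 a b : adj E' a b -> adj (pE S) a b.
Proof. by rewrite /adj in_setD1 => /andP[]. Qed.

Lemma supertree_edge_ends : u \in pV S /\ v \in pV S.
Proof. by case: (graph_adj supertree_graph (uvS : adj _ u v)). Qed.

Lemma side_cover z :
  z \in pV S -> connect (adj E') u z \/ connect (adj E') v z.
Proof.
have [_ [_ conn] _] := supertree_tree.
by move=> zV; apply/connect_setD1/conn => //; case: supertree_edge_ends.
Qed.

Lemma sides_disjoint x : x \in sideL S e u -> x \in sideL S e v -> False.
Proof.
rewrite !inE => /andP[_ cux] /andP[_ cvx].
apply: (tree_edge_separates supertree_tree uvS (connect_trans cux _)).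
by rewrite connect_adjC.
Qed.

Lemma label_side x : x \in labels S -> x \in sideL S e u \/ x \in sideL S e v.
Proof.
by rewrite inE => xV; case: (side_cover xV) => c; [left|right]; rewrite inE xV c.
Qed.

(* A maximal path from [u] in [S - e] ends at a leaf: an internal endpoint has
   two edges besides [e], and acyclicity sends both back to its predecessor. *)
Lemma side_nonempty : exists x, x \in sideL S e u.
Proof.
have [p [pp up maxp]] := maximal_upath (adj E') u.
have pS := sub_path adj_setD1 pp.
have zV : last u p \in pV S.
  by apply: path_last_in supertree_graph _ pS; case: supertree_edge_ends.
have cuz : connect (adj E') u (last u p) by apply/connectP; exists p.
case zE : (last u p) => [x|j]; first by exists x; rewrite inE -zE zV cuz.
have : 1 < #|[set g in pE S | last u p \in g] :\ e|.
  have [_ _ /(_ j)] := phS; rewrite -zE => /(_ zV); rewrite /deg.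
  by rewrite (cardsD1 e); case: (e \in _) => //= /ltnW.
case/card_gt1P => g1 [g2 [g1z g2z]].
have nb g : g \in [set g in pE S | last u p \in g] :\ e ->
    exists2 n, g = [set last u p; n] & n = last u (belast u p).
  rewrite in_setD1 inE => /and3P [ge gE zg].
  have [n gn zn] := graph_edge_at supertree_graph gE zg; exists n => //.
  have zn' : adj E' (last u p) n by rewrite /adj in_setD1 -gn ge.
  have [_ _ nz] := graph_adj supertree_graph zn.
  by apply: tree_upath_penultimate supertree_tree up pS (maxp _ zn') _ zn; rewrite eq_sym.
by have [n1 -> ->] := nb _ g1z; have [n2 -> ->] := nb _ g2z; rewrite eqxx.
Qed.

End SupertreeEdge.

Section Restriction.
Variables (X I J : finType) (S : ptree X J) (T : ptree X I) (u v : X + J).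
Hypotheses (phS : is_phylo S) (uvS : [set u; v] \in pE S).
Hypothesis labTS : labels T \subset labels S.

Let e := [set u; v].
Let E' := pE S :\ e.
Let Y : {set X + J} := [set inl x | x in labels T].
Let M := spanV (pV S) (pE S) Y.
Let ES := spanE (pE S) M.
Let W := suppV (pV S) (pE S) Y.

Lemma supp_span w : w \in W -> w \in M.
Proof. by rewrite inE => /andP[]. Qed.

Lemma supp_vertex w : w \in W -> w \in pV S.
Proof. by move/supp_span; rewrite inE => /andP[]. Qed.

Lemma adj_span a b : adj ES a b -> [/\ adj (pE S) a b, a \in M & b \in M].
Proof.
rewrite /adj inE => /andP[abS sub].
by split => //; apply: (subsetP sub); rewrite !inE eqxx ?orbT.
Qed.

Lemma label_supp x : x \in labels T -> inl x \in W.
Proof.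
move=> xT; have xS : inl x \in pV S by move: (subsetP labTS x xT); rewrite inE.
have xM : inl x \in M.
  rewrite inE xS; apply/asboolP; exists (inl x), (inl x).
  by split; [apply: imset_f|apply: imset_f|exists [::]; rewrite /= inE eqxx].
rewrite inE xM /=; have [_ /(_ x xS) leaf _] := phS.
suff : deg ES (inl x) <= 1 by case: (deg _ _) => [|[|]].
apply: leq_trans leaf; apply: subset_leq_card; apply/subsetP => g.
by rewrite !inE => /andP[/andP[-> _] ->].
Qed.

Lemma span_deg2 z : z \in M -> z \notin W -> deg ES z = 2.
Proof. by move=> zM; rewrite inE zM /= negbK => /eqP. Qed.

Lemma deg2_neighbours z a b c : deg ES z = 2 ->
  adj ES z a -> adj ES z b -> adj ES z c -> a != b -> a != c -> b = c.
Proof.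
move=> d2 za zb zc ab ac; apply/eqP; apply: contraT => bc.
have nz n : adj ES z n -> n != z.
  by case/adj_span => /(graph_adj (supertree_graph phS)) [_ _]; rewrite eq_sym.
have edges_neq n1 n2 : n1 != n2 -> n2 != z -> [set z; n1] != [set z; n2].
  move=> n12 n2z; apply/eqP => h; have : n2 \in [set z; n1] by rewrite h set22.
  by case/set2P => h'; [move: n2z|move: n12]; rewrite h' eqxx.
suff : #|[set z; a] |: [set [set z; b]; [set z; c]]| <= 2.
  by rewrite cardsU1 cards2 !inE negb_or !edges_neq ?nz.
rewrite -d2; apply: subset_leq_card; apply/subsetP => g; rewrite !inE.
by case/or3P => /eqP ->; rewrite set21 andbT;
  [move: za|move: zb|move: zc]; rewrite /adj inE.
Qed.

(* A piece of an edge of [S|L(T)]: a walk [s t ... w] in the subtree spanning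
   [L(T)] whose inner vertices are suppressed, ending at a vertex [w] of [S|L(T)]. *)
Definition suppressed_walk s t w := exists q,
  [/\ uniq (s :: t :: q), path (adj ES) s (t :: q), last t q = w, w \in W &
      forall z, z \in belast t q -> z \notin W].

Lemma suppressed_walk_tail_unique q r s t :
  uniq (s :: t :: q) -> path (adj ES) s (t :: q) -> last t q \in W ->
  (forall z, z \in belast t q -> z \notin W) ->
  uniq (s :: t :: r) -> path (adj ES) s (t :: r) -> last t r \in W ->
  (forall z, z \in belast t r -> z \notin W) -> q = r.
Proof.
elim: q s t r => [|q1 q IH] s t [|r1 r] //.
- move=> _ _ tW _ _ _ _ /(_ t); rewrite /= inE eqxx => /(_ isT).
  by rewrite tW.
- move=> _ _ _ /(_ t); rewrite /= inE eqxx => /(_ isT) ntW _ _ tW.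
  by rewrite tW in ntW.
move=> uq /= /and3P[st tq1 pq] lq iq ur /= /and3P[_ tr1 pr] lr ir.
have tW : t \notin W by apply: iq; rewrite inE eqxx.
have [_ tM _] := adj_span tq1.
have q1r1 : q1 = r1.
  apply: (@deg2_neighbours t s q1 r1 (span_deg2 tM tW) _ tq1 tr1).
  - by rewrite adj_sym.
  - by apply/eqP => h; move: uq; rewrite h /= !inE eqxx ?orbT.
  - by apply/eqP => h; move: ur; rewrite h /= !inE eqxx ?orbT.
subst r1; congr (_ :: _); apply: (IH t q1) => //.
- by case/andP: uq.
- by rewrite /= tq1.
- by move=> z zq; apply: iq; rewrite inE zq orbT.
- by case/andP: ur.
- by rewrite /= tq1.
- by move=> z zr; apply: ir; rewrite inE zr orbT.
Qed.

Lemma suppressed_walk_end_unique s t w1 w2 :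
  suppressed_walk s t w1 -> suppressed_walk s t w2 -> w1 = w2.
Proof.
case=> q [uq pq <- wq iq] [r [ur pr <- wr ir]].
by rewrite (suppressed_walk_tail_unique uq pq wq iq ur pr wr ir).
Qed.

Lemma suppAdj_crossing w1 w2 : w1 \in W -> w2 \in W ->
  suppAdj (pV S) (pE S) Y w1 w2 ->
  connect (adj E') u w1 -> ~ connect (adj E') u w2 ->
  exists s t, [/\ [set s; t] = e, suppressed_walk s t w2 & suppressed_walk t s w1].
Proof.
move=> w1W w2W [_ [p [up pp lp inner]]] c1 nc2.
have npp : ~~ path (adj E') w1 p.
  apply/negP => pp'; apply/nc2/(connect_trans c1)/connectP; exists p => //.
have [p1 [z [p2 [def_p yz nyz]]]] := path_exit pp npp; set y := last w1 p1 in yz nyz.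
have yze : [set y; z] = e.
  have [yzS _ _] := adj_span yz.
  move: nyz yzS; rewrite /adj /E' in_setD1 => nyz yzS.
  by rewrite yzS andbT negbK in nyz; apply/eqP.
have inner' z' : z' \in p1 ++ belast z p2 -> z' \notin W.
  by move=> h; apply: inner; rewrite def_p behead_belast_cat.
move: up; rewrite def_p -cat_cons cat_uniq => /and3P [u1 hs u2].
move: pp; rewrite def_p cat_path => /andP [pp1 pp2].
have zn : z \notin w1 :: p1 by apply: (hasPn hs); rewrite inE eqxx.
have yn : y \notin z :: p2.
  by apply/negP => h; move/hasPn: hs => /(_ y h); rewrite mem_last.
exists y, z; split => //.
- exists p2; split => //.
  + by rewrite cons_uniq yn u2.
  + by rewrite -lp def_p last_cat.
  + by move=> z' h; apply: inner'; rewrite mem_cat h orbT.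
- exists (rev (belast w1 p1)); split => //.
  + by rewrite /y cons_rev_belast /= mem_rev zn rev_uniq.
  + rewrite /= adj_sym yz /= /y rev_path.
    by rewrite (eq_path (e' := adj ES)) // => a b; rewrite adj_sym.
  + by rewrite /y last_rev_belast.
  + move=> z' zb.
    have ul : uniq (y :: rev (belast w1 p1)) by rewrite /y cons_rev_belast rev_uniq.
    have zw : z' != w1.
      apply/eqP => zw; move: ul; rewrite lastI rcons_uniq /y last_rev_belast.
      by rewrite zw in zb; rewrite -/y zb.
    move: (mem_belast zb); rewrite /y cons_rev_belast mem_rev in_cons (negbTE zw) /=.
    by move=> zp; apply: inner'; rewrite mem_cat zp.
Qed.

Lemma suppAdj_crossing_unique w1 w2 w3 w4 :
  w1 \in W -> w2 \in W -> w3 \in W -> w4 \in W ->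
  suppAdj (pV S) (pE S) Y w1 w2 -> suppAdj (pV S) (pE S) Y w3 w4 ->
  connect (adj E') u w1 -> ~ connect (adj E') u w2 ->
  connect (adj E') u w3 -> ~ connect (adj E') u w4 -> w1 = w3 /\ w2 = w4.
Proof.
move=> W1 W2 W3 W4 a12 a34 c1 n2 c3 n4.
have [s [t [st P2 P1]]] := suppAdj_crossing W1 W2 a12 c1 n2.
have [s' [t' [st' P4 P3]]] := suppAdj_crossing W3 W4 a34 c3 n4.
rewrite -st' in st; case: (set2_inj st) => [] [? ?]; subst s' t'.
  by split; [exact: suppressed_walk_end_unique P1 P3|
             exact: suppressed_walk_end_unique P2 P4].
by have w23 := suppressed_walk_end_unique P2 P3; subst w3.
Qed.

Section AgreementMap.
Variable f : X + J -> X + I.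
Hypothesis phT : is_phylo T.
Hypotheses (f_inj : {in W &, injective f}) (f_onto : f @: W = pV T).
Hypothesis f_label : forall x, inl x \in W -> f (inl x) = inl x.
Hypothesis f_adj : {in W &, forall a b,
  suppAdj (pV S) (pE S) Y a b <-> [set f a; f b] \in pE T}.

Let Tgraph : is_graph (pV T) (pE T). Proof. by case: phT => [[]]. Qed.

Definition u_image t := exists w, [/\ w \in W, f w = t & connect (adj E') u w].

Lemma f_preimage t : t \in pV T -> exists2 w, w \in W & f w = t.
Proof. by rewrite -f_onto => /imsetP [w wW ->]; exists w. Qed.

Lemma u_imageE w : w \in W -> u_image (f w) <-> connect (adj E') u w.
Proof.
move=> wW; split=> [[w' [w'W fw' cw']]|cw]; last by exists w.
by rewrite -(f_inj w'W wW fw').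
Qed.

Lemma u_image_label x : x \in labels T -> u_image (inl x) <-> x \in sideL S e u.
Proof.
move=> xT; have xW := label_supp xT; rewrite -(f_label xW) u_imageE // inE.
by rewrite (supp_vertex xW); split => // /idP.
Qed.

Lemma u_image_crossing_unique a b c d :
  adj (pE T) a b -> u_image a -> ~ u_image b ->
  adj (pE T) c d -> u_image c -> ~ u_image d -> a = c /\ b = d.
Proof.
move=> ab ua nub cd uc nud.
have [aV bV _] := graph_adj Tgraph ab; have [cV dV _] := graph_adj Tgraph cd.
have [w1 W1 ?] := f_preimage aV; have [w2 W2 ?] := f_preimage bV.
have [w3 W3 ?] := f_preimage cV; have [w4 W4 ?] := f_preimage dV; subst a b c d.
by have [-> ->] := suppAdj_crossing_unique W1 W2 W3 W4
  ((f_adj W1 W2).2 ab) ((f_adj W3 W4).2 cd) ((u_imageE W1).1 ua)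
  (fun c => nub ((u_imageE W2).2 c)) ((u_imageE W3).1 uc)
  (fun c => nud ((u_imageE W4).2 c)).
Qed.

Lemma u_image_invariant a b c d : adj (pE T) a b -> u_image a -> ~ u_image b ->
  u_image c -> adj (pE T :\ [set a; b]) c d -> u_image d.
Proof.
move=> ab ua nub uc; rewrite /adj in_setD1 => /andP [ncd cd].
apply: contrapT => nud; have [ac bd] := u_image_crossing_unique ab ua nub cd uc nud.
by rewrite ac bd eqxx in ncd.
Qed.

Lemma agreement_edge_sides x y :
  x \in labels T :&: sideL S e u -> y \in labels T :&: sideL S e v ->
  exists a b, [/\ [set a; b] \in pE T,
    sideL T [set a; b] a = labels T :&: sideL S e u &
    sideL T [set a; b] b = labels T :&: sideL S e v].
Proof.
case/setIP => xT xu /setIP [yT yv]; have [[_ connT _] _ _] := phT.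
have xV : inl x \in pV T by rewrite inE in xT.
have yV : inl y \in pV T by rewrite inE in yT.
have nuy : ~ u_image (inl y).
  by move/(u_image_label yT) => yu; apply: sides_disjoint yu yv.
have [a [b [ab ua nub]]] :=
  connect_exit (connT.2 _ _ xV yV) ((u_image_label xT).2 xu) nuy.
have [aV bV _] := graph_adj Tgraph ab.
have a_side z : z \in pV T ->
    connect (adj (pE T :\ [set a; b])) a z <-> u_image z.
  move=> zV; apply: (connect_setD1_side (Q := u_image) connT aV zV _ ua nub).
  by move=> c d; apply: u_image_invariant.
have b_side z : z \in pV T ->
    connect (adj (pE T :\ [set a; b])) b z <-> ~ u_image z.
  move=> zV; rewrite setUC.
  apply: (connect_setD1_side (Q := fun t => ~ u_image t) connT bV zV _ nub).
  - move=> c d nuc; rewrite setUC => cd ud; apply: nuc.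
    by apply: u_image_invariant ab ua nub ud _; rewrite adj_sym.
  - by move/(_ ua).
have labT z : (z \in labels T) = (inl z \in pV T) by rewrite inE.
exists a, b; split=> //; apply/setP => z; rewrite [LHS]inE -labT.
- apply/andP/setIP => [[zT c]|[zT zu]]; have zV : inl z \in pV T by rewrite -labT.
  + by split=> //; apply/(u_image_label zT)/(a_side _ zV).
  + by split=> //; apply/(a_side _ zV)/(u_image_label zT).
- apply/andP/setIP => [[zT c]|[zT zv]]; have zV : inl z \in pV T by rewrite -labT.
  + split=> //; have zS : z \in labels S := subsetP labTS z zT.
    case: (label_side phS uvS zS) => // zu; exfalso.
    exact/((b_side _ zV).1 c)/(u_image_label zT).
  + split=> //; apply/(b_side _ zV) => /(u_image_label zT) zu.
    exact: sides_disjoint zu zv.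
Qed.
End AgreementMap.

Lemma agreement_edge x y : is_phylo T -> agrees S T ->
  x \in labels T :&: sideL S e u -> y \in labels T :&: sideL S e v ->
  exists a b, [/\ [set a; b] \in pE T,
    sideL T [set a; b] a = labels T :&: sideL S e u &
    sideL T [set a; b] b = labels T :&: sideL S e v].
Proof.
move=> phT [f [f_inj f_onto f_label f_adj]].
exact: (agreement_edge_sides phT f_inj f_onto f_label f_adj).
Qed.

End Restriction.

Section Profile.
Variables (X I J : finType) (k : nat) (P : 'I_k -> ptree X I) (S : ptree X J).
Hypothesis phP : forall i, is_phylo (P i).
Hypothesis agS : agreement_supertree P S.
Variable e : {set X + J}.
Hypothesis eS : e \in pE S.

Let Psi := psi P S e.

Let phS : is_phylo S. Proof. by case: agS. Qed.

Lemma input_graph i : is_graph (pV (P i)) (pE (P i)).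
Proof. by case: (phP i) => [[]]. Qed.

Lemma input_labels_sub i : labels (P i) \subset labels S.
Proof. by case: agS => _ -> _; apply: (bigcup_sup i). Qed.

Lemma label_in_input x : x \in labels S -> exists i, inl x \in pV (P i).
Proof. by case: agS => _ -> _ /bigcupP [i _]; rewrite inE; exists i. Qed.

Lemma emb_dV i w : w \in pV (P i) -> emb i w \in dV P.
Proof. by move=> wV; apply/bigcupP; exists i => //; apply: imset_f. Qed.

Lemma emb_inl (i : 'I_k) (w : X + I) x : emb i w = inl x -> w = inl x.
Proof. by case: w => //= ? [->]. Qed.

Lemma psi_sub : Psi \subset dE P.
Proof.
apply/subsetP => f; rewrite inE => /existsP [i /existsP [g /andP [gE
  /existsP [? /existsP [? /existsP [? /existsP [? /and5P [_ _ /eqP -> _ _]]]]]]]].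
by apply/bigcupP; exists i => //; apply: imset_f.
Qed.

Lemma psi_intro i a b u v :
  e = [set u; v] -> [set a; b] \in pE (P i) ->
  labels (P i) :&: sideL S e u != set0 -> labels (P i) :&: sideL S e v != set0 ->
  sideL (P i) [set a; b] a = labels (P i) :&: sideL S e u ->
  sideL (P i) [set a; b] b = labels (P i) :&: sideL S e v ->
  emb i @: [set a; b] \in Psi.
Proof.
move=> euv gE nu nv sa sb; rewrite inE.
apply/existsP; exists i; apply/existsP; exists [set a; b]; rewrite gE /=.
apply/existsP; exists u; apply/existsP; exists v; apply/existsP; exists a.
by apply/existsP; exists b; rewrite nu nv sa sb euv !eqxx.
Qed.

Lemma psi_elim f : f \in Psi -> exists i u v a b,
  [/\ e = [set u; v], [set a; b] \in pE (P i), f = emb i @: [set a; b],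
      sideL (P i) [set a; b] a = labels (P i) :&: sideL S e u &
      sideL (P i) [set a; b] b = labels (P i) :&: sideL S e v].
Proof.
rewrite inE => /existsP [i /existsP [g /andP [gE /existsP [u /existsP [v
  /existsP [a /existsP [b /and5P [/eqP euv /eqP gab /eqP -> _
  /and3P [_ /eqP sa /eqP sb]]]]]]]]].
by subst g; exists i, u, v, a, b.
Qed.

Definition kept_edges i := [set g in pE (P i) | emb i @: g \notin Psi].

Lemma kept_edges_sub i (g : {set X + I}) :
  emb i @: g \in Psi -> kept_edges i \subset pE (P i) :\ g.
Proof.
move=> gPsi; apply/subsetP => g'; rewrite inE => /andP [g'E ng'].
by rewrite in_setD1 g'E andbT; apply: contraNneq ng' => ->.
Qed.

Lemma kept_adj i a b :
  adj (dE P :\: Psi) (emb i a) (emb i b) -> adj (pE (P i)) a b ->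
  adj (kept_edges i) a b.
Proof.
rewrite {1}/adj in_setD => /andP [nPsi _] ab.
by move: ab; rewrite /adj [_ \in kept_edges i]inE => ->; rewrite imset_set2.
Qed.

Section Orientation.
Variables u v : X + J.
Hypothesis euv : e = [set u; v].

Let uvS : [set u; v] \in pE S. Proof. by rewrite -euv. Qed.

Definition avoids i w := forall y, y \in sideL S e v -> inl y \in pV (P i) ->
  ~ connect (adj (kept_edges i)) w (inl y).

Definition avoids_dV z := forall i w, w \in pV (P i) -> emb i w = z -> avoids i w.

Lemma psi_side_avoids i a b w :
  emb i @: [set a; b] \in Psi ->
  sideL (P i) [set a; b] a = labels (P i) :&: sideL S e u ->
  connect (adj (pE (P i) :\ [set a; b])) a w -> avoids i w.
Proof.
move=> abPsi sa caw y yv yV cwy.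
have : y \in sideL (P i) [set a; b] a.
  by rewrite inE yV (connect_trans caw) // (connect_adjS (kept_edges_sub abPsi)).
rewrite sa => /setIP [_ yu]; rewrite euv in yu yv.
exact: sides_disjoint phS uvS _ yu yv.
Qed.

Lemma label_avoids x j : x \in sideL S e u -> inl x \in pV (P j) -> avoids j (inl x).
Proof.
move=> xu xV y yv yV.
have xuT : x \in labels (P j) :&: sideL S e u by rewrite inE xu inE xV.
have yvT : y \in labels (P j) :&: sideL S e v by rewrite inE yv inE yV.
have [_ _ /(_ j) agj] := agS.
rewrite euv in xuT yvT.
have [a [b [abE]]] := agreement_edge phS uvS (input_labels_sub j) (phP j) agj xuT yvT.
rewrite -euv => sa sb.
have abPsi : emb j @: [set a; b] \in Psi.
  by apply: psi_intro euv abE _ _ sa sb; apply/set0Pn; [exists x|exists y]; rewrite euv.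
apply: (psi_side_avoids abPsi sa _ yv yV).
by move: xuT; rewrite -euv -sa inE => /andP [].
Qed.

(* A leaf avoiding the [v]-side is a [u]-side leaf, so it avoids the [v]-side
   in every input tree containing it. *)
Lemma avoids_lift i w : w \in pV (P i) -> avoids i w -> avoids_dV (emb i w).
Proof.
move=> wV aw j w' w'V; case: w wV aw => [x|c] wV aw /=.
  move/emb_inl => ew'; subst w'.
  have xS : x \in labels S by apply: (subsetP (input_labels_sub i)); rewrite inE.
  have := label_side phS uvS xS; rewrite -euv => -[xu|xv]; first exact: label_avoids.
  by case: (aw x xv wV (connect0 _ _)).
by case: w' w'V => [x'|c'] //= w'V [ji ->]; subst j.
Qed.

Lemma avoids_dV_connect z1 z2 :
  avoids_dV z1 -> connect (adj (dE P :\: Psi)) z1 z2 -> avoids_dV z2.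
Proof.
move=> az1; apply: connect_invariant az1 => {z1 z2} z1 z2 az1 z12.
have z12' := z12; move: z12'; rewrite /adj in_setD => /andP [_ /bigcupP [i _]].
case/imsetP => g gE; have [a [b [_ _ _ gab]]] := @input_graph i _ gE; subst g.
have step c d : adj (pE (P i)) c d -> z1 = emb i c -> z2 = emb i d -> avoids_dV z2.
  move=> cd ? ?; subst z1 z2; have [cV dV _] := graph_adj (@input_graph i) cd.
  apply: avoids_lift dV _ => y yv yV cdy; apply: (az1 i c cV erefl y yv yV).
  exact/(connect_trans _ cdy)/connect1/kept_adj.
rewrite imset_set2 => /set2_inj [] [ea eb]; first exact: step gE ea eb.
by apply: step ea eb; rewrite /adj setUC.
Qed.

Lemma side_label_not_avoids y j :
  y \in sideL S e v -> inl y \in pV (P j) -> ~ avoids_dV (inl y).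
Proof. by move=> yv yV ay; apply: (ay j (inl y) yV erefl y yv yV (connect0 _ _)). Qed.

Lemma side_label_avoids x : x \in sideL S e u -> avoids_dV (inl x).
Proof. by move=> xu j w wV /emb_inl ew; subst w; apply: label_avoids. Qed.

End Orientation.

Lemma side_label_in_input u x :
  x \in sideL S e u -> exists2 i, inl x \in pV (P i) & inl x \in dV P.
Proof.
rewrite inE => /andP [xS _]; have xL : x \in labels S by rewrite inE.
by have [i xi] := label_in_input xL; exists i => //; apply: emb_dV xi.
Qed.

Lemma sides_separated u v : e = [set u; v] -> exists x y,
  [/\ x \in sideL S e u, y \in sideL S e v &
      ~ connect (adj (dE P :\: Psi)) (inl x) (inl y)].
Proof.
move=> euv; have evu : e = [set v; u] by rewrite euv setUC.
have [x xu] : exists x, x \in sideL S e u.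
  by rewrite euv; apply: side_nonempty phS _; rewrite -euv.
have [y yv] : exists y, y \in sideL S e v.
  by rewrite evu; apply: side_nonempty phS _; rewrite -evu.
have [j yV _] := side_label_in_input yv.
exists x, y; split=> // cxy; apply: (side_label_not_avoids yv yV).
exact: (avoids_dV_connect euv (side_label_avoids euv xu) cxy).
Qed.

Lemma psi_cut : is_cut (dV P) (dE P) Psi.
Proof.
split; first exact: psi_sub.
have [u [v [_ _ _ euv]]] := supertree_graph phS eS.
have [x [y [xu yv nc]]] := sides_separated euv.
have [_ _ xV] := side_label_in_input xu; have [_ _ yV] := side_label_in_input yv.
by case=> _ /(_ _ _ xV yV).
Qed.

Lemma psi_edges_separated : ncomp (dV P) (dE P :\: Psi) = 2 ->
  forall f, f \in Psi -> exists a b,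
    [/\ f = [set a; b], a \in dV P, b \in dV P & ~~ connect (adj (dE P :\: Psi)) a b].
Proof.
move=> n2 f fPsi; have [i [u [v [a [b [euv abE def_f sa sb]]]]]] := psi_elim fPsi.
have evu : e = [set v; u] by rewrite euv setUC.
have [aV bV _] := graph_adj (@input_graph i) (abE : adj _ a b).
have ava : avoids_dV v (emb i a).
  apply: (avoids_lift euv aV).
  by apply: (psi_side_avoids euv _ sa (connect0 _ _)); rewrite -def_f.
have avb : avoids_dV u (emb i b).
  apply: (avoids_lift evu bV); rewrite setUC in sb.
  by apply: (psi_side_avoids evu _ sb (connect0 _ _)); rewrite setUC -def_f.
have [x [y [xu yv nxy]]] := sides_separated euv.
have [jx xj xV] := side_label_in_input xu; have [jy yj yV] := side_label_in_input yv.
have cover := ncomp2_cover n2 xV yV (introN idP nxy).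
have cxa : connect (adj (dE P :\: Psi)) (inl x) (emb i a).
  case: (cover _ (emb_dV aV)) => // cya; exfalso; apply: (side_label_not_avoids yv yj).
  by apply: (avoids_dV_connect euv ava); rewrite connect_adjC.
have cyb : connect (adj (dE P :\: Psi)) (inl y) (emb i b).
  case: (cover _ (emb_dV bV)) => // cxb; exfalso; apply: (side_label_not_avoids xu xj).
  by apply: (avoids_dV_connect evu avb); rewrite connect_adjC.
exists (emb i a), (emb i b); split; rewrite ?emb_dV -?imset_set2 //.
apply/negP => cab; apply/nxy/(connect_trans cxa)/(connect_trans cab).
by rewrite connect_adjC.
Qed.

End Profile.

Theorem lemma13 (X I J : finType) (k : nat)
    (P : 'I_k -> ptree X I) (S : ptree X J) :
  (forall i, is_phylo (P i)) ->
  connected_graph (dV P) (dE P) ->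
  agreement_supertree P S ->
  (forall e, e \in pE S -> is_cut (dV P) (dE P) (psi P S e)) /\
  (forall e, e \in pE S ->
     (is_min_cut (dV P) (dE P) (psi P S e) <->
      ncomp (dV P) (dE P :\: psi P S e) = 2)).
Proof.
move=> phP connG agS; split=> e eS; first exact: (psi_cut phP agS eS).
split; first exact: min_cut_ncomp2.
move=> n2; apply: (ncomp2_min_cut (psi_cut phP agS eS) n2).
exact: (psi_edges_separated phP agS eS n2).
Qed.
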